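(* Let $\mathcal{G}=(G,(m,r))$ be an undirected, mutant-biased fitness graph on $n=|V|$ nodes, and let $S\subseteq V$ be a seed set. Let $T(\mathcal{G},S)$ denote the expected number of steps of the Heterogeneous Moran process started from $\mathcal{X}_0=S$ until it reaches one of the absorbing configurations $\emptyset$ or $V$. Then \[ T(\mathcal{G},S)\le \left(n^2\cdot\frac{m_{\max}}{r_{\min}}\right)^3, \] where $m_{\max}=\max_{u\in V} m(u)$ and $r_{\min}=\min_{u\in V} r(u)$.
   Context: A fitness graph is $\mathcal{G}=(G,(m,r))$ where $G=(V,E,w)$ is a strongly connected directed graph, $w(u,\cdot)$ is a probability distribution over the out-neighbours of $u$ (positive on edges), and $r,m\colon V\to(0,\infty)$ are the resident and mutant fitness functions. $G$ is undirected if $E$ is symmetric and $w(u,v)=1/d(u)$ for every edge $(u,v)$, where $d(u)$ is the degree of $u$. $\mathcal{G}$ is mutant-biased if $m(u)\ge r(u)$ for all $u\in V$. A configuration is a set $X\subseteq V$ (the mutants); the fitness of $u$ in $X$ is $f_X(u)=m(u)$ if $u\in X$ and $f_X(u)=r(u)$ otherwise. The Heterogeneous Moran process is the Markov chain $\mathcal{X}_0=S,\mathcal{X}_1,\dots$ where, from $\mathcal{X}_t=X$, a node $u$ is chosen with probability $f_X(u)/\sum_{v\in V}f_X(v)$, then a node $v$ is chosen with probability $w(u,v)$, and $v$ takes the type of $u$ (so $\mathcal{X}_{t+1}=X\cup\{v\}$ if $u\in X$ and $\mathcal{X}_{t+1}=X\setminus\{v\}$ otherwise). The configurations $\emptyset$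 and $V$ are absorbing. *)

From HB Require Import structures.
From mathcomp Require Import all_boot all_order all_algebra.
From mathcomp Require Import all_classical all_reals all_analysis.
Set Implicit Arguments. Unset Strict Implicit. Unset Printing Implicit Defensive.
Import Order.TTheory GRing.Theory Num.Theory.
Local Open Scope ring_scope.

Section Moran.
Variables (R : realType) (V : finType).

Definition undirected_graph (e : rel V) : Prop :=
  symmetric e /\ irreflexive e.

Definition strongly_connected (e : rel V) : Prop :=
  forall u v : V, connect e u v.

Definition deg (e : rel V) (u : V) : nat := #|[set v | e u v]|.

Definition weight (e : rel V) (u v : V) : R :=
  if e u v then (deg e u)%:R^-1 else 0.

Definition mutant_biased (m r : V -> R) : Prop := forall u, r u <= m u.

Definition fitness (m r : V -> R) (X : {set V}) (u : V) : R :=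
  if u \in X then m u else r u.

Definition total_fitness (m r : V -> R) (X : {set V}) : R :=
  \sum_(v : V) fitness m r X v.

Definition moran_step (e : rel V) (m r : V -> R) (X Y : {set V}) : R :=
  \sum_(u : V) \sum_(v : V)
     (fitness m r X u / total_fitness m r X) * weight e u v *
     (if Y == (if u \in X then X :|: [set v] else X :\ v) then 1 else 0).

Fixpoint moran_dist (e : rel V) (m r : V -> R) (S : {set V}) (t : nat)
  : {set V} -> R :=
  match t with
  | 0 => fun Y => if Y == S then 1 else 0
  | t'.+1 => fun Y => \sum_(X : {set V}) moran_dist e m r S t' X * moran_step e m r X Y
  end.

(* P(tau > t) = P(X_t is not absorbing), as the absorbing states are closed. *)
Definition not_absorbed_prob (e : rel V) (m r : V -> R) (S : {set V}) (t : nat) : R :=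
  \sum_(X : {set V} | (X != finset.set0) && (X != [set: V])) moran_dist e m r S t X.

(* Expected absorption time T(G,S) = E[tau] = sum_{t>=0} P(tau > t), in \bar R. *)
Definition expected_absorption_time (e : rel V) (m r : V -> R) (S : {set V})
  : \bar R :=
  (\sum_(0 <= t <oo) (not_absorbed_prob e m r S t)%:E)%E.

Definition m_max (m : V -> R) : R :=
  match [pick u : V] with Some u0 => \big[Num.max/m u0]_(u : V) m u | None => 0 end.
Definition r_min (r : V -> R) : R :=
  match [pick u : V] with Some u0 => \big[Num.min/r u0]_(u : V) r u | None => 0 end.

End Moran.

From HB Require Import structures.
From mathcomp Require Import all_boot all_order all_algebra.
From mathcomp Require Import all_classical all_reals all_analysis.
From mathcomp Require Import ring lra.
Set Implicit Arguments. Unset Strict Implicit. Unset Printing Implicit Defensive.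
Import Order.TTheory GRing.Theory Num.Theory.
Local Open Scope ring_scope.

(* Weight each node x by r(x)/d(x) and let phi(X) be the total weight of the
   mutants.  On an undirected graph the two transitions across an edge {u,v}
   with u mutant and v resident change phi by +r(v)/d(v) and -r(u)/d(u), with
   probabilities proportional to m(u)/d(u) and r(v)/d(v); hence the drift of
   phi is a sum of terms (m(u) - r(u)) r(v) / (F d(u) d(v)) >= 0, F being the
   total fitness.  So phi^2 grows in expectation at least by E[(Delta phi)^2],
   which before absorption is at least r_min^3 / (n^4 m_max) because some edge
   crosses the boundary of X.  As 0 <= phi^2 <= (n m_max)^2, the expected
   number of non-absorbed steps is at most
   (n m_max)^2 n^4 m_max / r_min^3 = (n^2 m_max / r_min)^3. *)

Lemma ler_pdiv (R : numFieldType) (x x' y y' : R) :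
  0 <= x -> x <= x' -> 0 < y' -> y' <= y -> x / y <= x' / y'.
Proof.
move=> x_ge0 xx' y'_gt0 y'y; apply: ler_pM => //.
  by rewrite invr_ge0 (le_trans (ltW y'_gt0)).
by rewrite lef_pV2 ?posrE // (lt_le_trans y'_gt0).
Qed.

Section PotentialDrift.
Variables (R : realDomainType) (T : finType) (P : T -> T -> R).
Variable mu : nat -> T -> R.
Hypothesis mu_ge0 : forall t x, 0 <= mu t x.
Hypothesis sum_mu : forall t, \sum_x mu t x = 1.
Hypothesis muS : forall t y, mu t.+1 y = \sum_x mu t x * P x y.
Variables (g a : T -> R) (s B : R).
Hypothesis g_ge0 : forall x, 0 <= g x.
Hypothesis g_le : forall x, g x <= B.
Hypothesis g_drift : forall x, g x + s * a x <= \sum_y P x y * g y.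

Let mean t := \sum_x mu t x * g x.

Lemma mean_drift t : mean t + s * \sum_x mu t x * a x <= mean t.+1.
Proof.
have -> : mean t.+1 = \sum_x mu t x * \sum_y P x y * g y.
  rewrite /mean; under eq_bigr => y _ do rewrite muS mulr_suml.
  rewrite exchange_big; apply: eq_bigr => x _; rewrite mulr_sumr.
  by apply: eq_bigr => y _; rewrite mulrA.
rewrite /mean mulr_sumr -big_split; apply: ler_sum => x _.
by rewrite /= [s * _]mulrCA -mulrDr ler_wpM2l.
Qed.

Lemma potential_drift_bound N :
  s * \sum_(0 <= t < N) \sum_x mu t x * a x <= B.
Proof.
have telescope : s * \sum_(0 <= t < N) \sum_x mu t x * a x <= mean N - mean 0.
  elim: N => [|N IH]; first by rewrite big_geq // mulr0 subrr.
  by rewrite big_nat_recr //= mulrDr; have := mean_drift N; lra.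
have mean_ge0 : 0 <= mean 0 by apply: sumr_ge0 => x _; apply: mulr_ge0.
have mean_le : mean N <= B.
  rewrite -[B]mul1r -(sum_mu N) mulr_suml; apply: ler_sum => x _.
  exact: ler_wpM2l.
lra.
Qed.

End PotentialDrift.

Section Extrema.
Variables (R : realType) (V : finType).

Lemma le_m_max (m : V -> R) u : m u <= m_max m.
Proof.
rewrite /m_max; case: pickP => [u0 _|/(_ u) //].
by rewrite (bigD1 u) //= le_max lexx.
Qed.

Lemma r_min_le (r : V -> R) u : r_min r <= r u.
Proof.
rewrite /r_min; case: pickP => [u0 _|/(_ u) //].
by rewrite (bigD1 u) //= ge_min lexx.
Qed.

Lemma r_min_gt0 (r : V -> R) (u : V) : (forall v, 0 < r v) -> 0 < r_min r.
Proof.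
move=> r_gt0; rewrite /r_min; case: pickP => [u0 _|/(_ u) //].
by apply: (big_ind (fun x => 0 < x)) => // x y x0 y0; rewrite lt_min x0 y0.
Qed.

Lemma m_max_ge0 (m : V -> R) : (forall v, 0 < m v) -> 0 <= m_max m.
Proof.
move=> m_gt0; have [u _|V0] := pickP (xpredT : pred V).
  exact: le_trans (ltW (m_gt0 u)) (le_m_max m u).
by rewrite /m_max; case: pickP => [u|//]; have := V0 u.
Qed.

Lemma r_min_ge0 (r : V -> R) : (forall v, 0 < r v) -> 0 <= r_min r.
Proof.
move=> r_gt0; have [u _|V0] := pickP (xpredT : pred V).
  exact: ltW (r_min_gt0 u r_gt0).
by rewrite /r_min; case: pickP => [u|//]; have := V0 u.
Qed.

End Extrema.

Section Graph.
Variables (R : realType) (V : finType) (e : rel V).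
Hypothesis e_conn : strongly_connected e.

Lemma card_gt1_nontrivial (X : {set V}) :
  X != finset.set0 -> X != [set: V] -> (1 < #|V|)%N.
Proof.
move=> /set0Pn [x xX]; rewrite -finset.subTset => /subsetPn [y _ yX].
by apply/card_gt1P; exists x, y; split=> //; apply: contraNneq yX => <-.
Qed.

Lemma exists_boundary_edge (X : {set V}) :
  X != finset.set0 -> X != [set: V] ->
  exists u v, [/\ u \in X, v \notin X & e u v].
Proof.
move=> /set0Pn [x xX]; rewrite -finset.subTset => /subsetPn [y _ yX].
move: yX; have /connectP [p pth ->] := e_conn x y.
elim: p x xX pth => [|z p IH] x xX /=; first by rewrite xX.
move=> /andP [exz pth] yX.
case: (boolP (z \in X)) => zX; first exact: IH zX pth yX.
by exists x, z.
Qed.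

Lemma deg_gt0 u : (1 < #|V|)%N -> (0 < deg e u)%N.
Proof.
move=> /card_gt1P [x [y [_ _ xy]]].
have [w wu] : exists w, w != u.
  by case: (eqVneq x u) => [<-|]; [exists y; rewrite eq_sym | exists x].
have /connectP [[|z p] /= pth wl] := e_conn u w; first by rewrite wl eqxx in wu.
move: pth => /andP [euz _].
by rewrite /deg card_gt0; apply/set0Pn; exists z; rewrite inE.
Qed.

Lemma sum_weight u : (0 < deg e u)%N -> \sum_v weight R e u v = 1.
Proof.
rewrite /weight -big_mkcond /= sumr_const /deg cardsE => deg_u.
by rewrite -[LHS]mulr_natr mulVf // pnatr_eq0 -lt0n.
Qed.

End Graph.

Section MoranProcess.
Variables (R : realType) (V : finType) (e : rel V) (m r : V -> R).
Hypothesis e_undirected : undirected_graph e.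
Hypothesis e_conn : strongly_connected e.
Hypothesis m_gt0 : forall u, 0 < m u.
Hypothesis r_gt0 : forall u, 0 < r u.
Hypothesis biased : mutant_biased m r.
Hypothesis V_gt1 : (1 < #|V|)%N.

Let e_sym : symmetric e := proj1 e_undirected.

Let n : R := #|V|%:R.

Let n_gt0 : 0 < n.
Proof. by rewrite ltr0n; apply: ltn_trans V_gt1. Qed.

Let some_node : V := enum_val (Ordinal (ltnW V_gt1)).

Let rmin_gt0 : 0 < r_min r := r_min_gt0 some_node r_gt0.

Let mmax_gt0 : 0 < m_max m := lt_le_trans (m_gt0 some_node) (le_m_max m some_node).

Let degr_gt0 u : 0 < (deg e u)%:R :> R.
Proof. by rewrite ltr0n deg_gt0. Qed.

Let degr_le_n u : (deg e u)%:R <= n.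
Proof. by rewrite ler_nat max_card. Qed.

Lemma fitness_gt0 X u : 0 < fitness m r X u.
Proof. by rewrite /fitness; case: ifP. Qed.

Lemma fitness_le_m_max X u : fitness m r X u <= m_max m.
Proof.
rewrite /fitness; case: ifP => _; first exact: le_m_max.
exact: le_trans (biased u) (le_m_max m u).
Qed.

Lemma r_min_le_fitness X u : r_min r <= fitness m r X u.
Proof.
rewrite /fitness; case: ifP => _; last exact: r_min_le.
exact: le_trans (r_min_le r u) (biased u).
Qed.

Lemma total_fitness_ge0 X : 0 <= total_fitness m r X.
Proof. by apply: sumr_ge0 => v _; apply: ltW (fitness_gt0 _ _). Qed.

Lemma total_fitness_gt0 X : 0 < total_fitness m r X.
Proof.
rewrite /total_fitness (bigD1 some_node) //= ltr_pwDl ?fitness_gt0 //.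
by apply: sumr_ge0 => v _; apply: ltW (fitness_gt0 _ _).
Qed.

Lemma total_fitness_le X : total_fitness m r X <= n * m_max m.
Proof.
apply: le_trans (ler_sum _ (fun v _ => fitness_le_m_max X v)) _.
by rewrite sumr_const mulr_natl.
Qed.

Definition moran_next (X : {set V}) u v : {set V} :=
  if u \in X then X :|: [set v] else X :\ v.

Definition moran_pick (X : {set V}) u v : R :=
  fitness m r X u / total_fitness m r X * weight R e u v.

Definition moran_mean (X : {set V}) (h : V -> V -> R) : R :=
  \sum_u \sum_v moran_pick X u v * h u v.

Lemma moran_pick_ge0 X u v : 0 <= moran_pick X u v.
Proof.
rewrite /moran_pick /weight; case: ifP => _; last by rewrite mulr0.
by rewrite !mulr_ge0 ?invr_ge0 ?total_fitness_ge0 // ltW ?fitness_gt0.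
Qed.

Lemma moran_pick_ge X u v : e u v ->
  r_min r / (n * m_max m) / n <= moran_pick X u v.
Proof.
move=> euv; rewrite /moran_pick /weight euv.
apply: ler_pM.
- by rewrite divr_ge0 ?mulr_ge0 // ltW.
- by rewrite invr_ge0 ltW.
- exact: ler_pdiv (ltW _) (r_min_le_fitness X u) (total_fitness_gt0 X) (total_fitness_le X).
- by rewrite lef_pV2 ?posrE.
Qed.

Lemma moran_stepE X (g : {set V} -> R) :
  \sum_Y moran_step e m r X Y * g Y = moran_mean X (fun u v => g (moran_next X u v)).
Proof.
transitivity (\sum_Y \sum_u \sum_v moran_pick X u v *
   ((if Y == moran_next X u v then 1 else 0) * g Y)).
  apply: eq_bigr => Y _; rewrite mulr_suml; apply: eq_bigr => u _.
  by rewrite mulr_suml; apply: eq_bigr => v _; rewrite /moran_pick mulrA.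
rewrite exchange_big; apply: eq_bigr => u _; rewrite exchange_big.
apply: eq_bigr => v _; rewrite -mulr_sumr (bigD1 (moran_next X u v)) //=.
by rewrite eqxx mul1r big1 ?addr0 // => Y /negbTE ->; rewrite mul0r.
Qed.

Lemma eq_moran_mean X h k :
  (forall u v, h u v = k u v) -> moran_mean X h = moran_mean X k.
Proof.
by move=> hk; apply: eq_bigr => u _; apply: eq_bigr => v _; rewrite hk.
Qed.

Lemma moran_meanD X h k :
  moran_mean X (fun u v => h u v + k u v) = moran_mean X h + moran_mean X k.
Proof.
rewrite /moran_mean -big_split; apply: eq_bigr => u _.
by rewrite -big_split; apply: eq_bigr => v _; rewrite mulrDr.
Qed.

Lemma moran_meanZ X c h :
  moran_mean X (fun u v => c * h u v) = c * moran_mean X h.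
Proof.
rewrite /moran_mean mulr_sumr; apply: eq_bigr => u _.
by rewrite mulr_sumr; apply: eq_bigr => v _; rewrite mulrCA.
Qed.

Lemma moran_mean_cst X c : moran_mean X (fun _ _ => c) = c.
Proof.
rewrite /moran_mean /moran_pick.
under eq_bigr => u _ do rewrite -mulr_suml -mulr_sumr sum_weight ?deg_gt0 // mulr1.
by rewrite -!mulr_suml mulfV ?mul1r // gt_eqF ?total_fitness_gt0.
Qed.

Lemma moran_mean_ge_term X h u v : (forall u v, 0 <= h u v) ->
  moran_pick X u v * h u v <= moran_mean X h.
Proof.
move=> h_ge0; have term_ge0 u' v' := mulr_ge0 (moran_pick_ge0 X u' v') (h_ge0 u' v').
rewrite /moran_mean (bigD1 u) //= (bigD1 v) //= -addrA lerDl.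
by rewrite addr_ge0 ?sumr_ge0 // => u' _; rewrite sumr_ge0.
Qed.

Lemma moran_mean_ge0 X h : (forall u v, 0 <= h u v) -> 0 <= moran_mean X h.
Proof.
by move=> h_ge0; apply: sumr_ge0 => u _; apply: sumr_ge0 => v _;
  rewrite mulr_ge0 ?moran_pick_ge0.
Qed.

Lemma moran_step_ge0 X Y : 0 <= moran_step e m r X Y.
Proof.
apply: sumr_ge0 => u _; apply: sumr_ge0 => v _.
by apply: mulr_ge0; [exact: (moran_pick_ge0 X u v) | case: ifP].
Qed.

Lemma sum_moran_step X : \sum_Y moran_step e m r X Y = 1.
Proof.
rewrite -[RHS](moran_mean_cst X) -(moran_stepE X (fun _ => 1)).
by apply: eq_bigr => Y _; rewrite mulr1.
Qed.

Lemma moran_dist_ge0 S t Y : 0 <= moran_dist e m r S t Y.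
Proof.
elim: t Y => [|t IH] Y /=; first by case: ifP.
by apply: sumr_ge0 => X _; rewrite mulr_ge0 ?moran_step_ge0.
Qed.

Lemma sum_moran_dist S t : \sum_Y moran_dist e m r S t Y = 1.
Proof.
elim: t => [|t IH] /=.
  by rewrite (bigD1 S) //= eqxx big1 ?addr0 // => Y /negbTE ->.
rewrite exchange_big /= -[RHS]IH; apply: eq_bigr => X _.
by rewrite -mulr_sumr sum_moran_step mulr1.
Qed.

Definition potential_weight x : R := r x / (deg e x)%:R.

Definition potential (X : {set V}) : R := \sum_(x in X) potential_weight x.

Lemma potential_weight_ge x : r_min r / n <= potential_weight x.
Proof.
exact: ler_pdiv (ltW rmin_gt0) (r_min_le r x) (degr_gt0 x) (degr_le_n x).
Qed.

Lemma potential_weight_le_m_max x : potential_weight x <= m_max m.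
Proof.
apply: le_trans (le_trans (biased x) (le_m_max m x)).
by rewrite ler_pdivrMr // ler_peMr ?(ltW (r_gt0 x)) // ler1n deg_gt0.
Qed.

Lemma potential_ge0 X : 0 <= potential X.
Proof. by apply: sumr_ge0 => x _; rewrite divr_ge0 ?ltW. Qed.

Lemma potential_le X : potential X <= n * m_max m.
Proof.
apply: le_trans (ler_sum _ (fun x _ => potential_weight_le_m_max x)) _.
by rewrite sumr_const -mulr_natl ler_wpM2r ?(ltW mmax_gt0) // ler_nat max_card.
Qed.

Lemma potential_next X u v :
  potential (moran_next X u v) - potential X =
  if (u \in X) == (v \in X) then 0
  else if u \in X then potential_weight v else - potential_weight v.
Proof.
rewrite /moran_next /potential; case uX: (u \in X); case vX: (v \in X) => /=.
- by rewrite (finset.setUidPl _) ?subrr // finset.sub1set.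
- by rewrite finset.setUC big_setU1 ?vX //= addrK.
- by rewrite [in X in _ - X](big_setD1 v) //= opprD addrCA subrr addr0.
- by rewrite (finset.setDidPl _) ?subrr // disjoint_sym disjoints1 vX.
Qed.

Lemma potential_pair_drift_ge0 X u v :
  0 <= moran_pick X u v * (potential (moran_next X u v) - potential X)
       + moran_pick X v u * (potential (moran_next X v u) - potential X).
Proof.
have cross a b : 0 <= m a / total_fitness m r X / (deg e a)%:R * potential_weight b
    + r b / total_fitness m r X / (deg e b)%:R * - potential_weight a.
  rewrite /potential_weight.
  set F := total_fitness m r X; set da := (deg e a)%:R; set db := (deg e b)%:R.
  have -> : m a / F / da * (r b / db) + r b / F / db * - (r a / da) =
            (m a - r a) * (r b / F / da / db) by ring.
  by rewrite mulr_ge0 ?subr_ge0 ?biased // !divr_ge0 ?ler0n ?total_fitness_ge0 ?ltW.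
rewrite !potential_next /moran_pick /weight [e v u]e_sym /fitness.
case: (e u v); last by rewrite !mulr0 !mul0r addr0.
case: (u \in X); case: (v \in X) => /=.
- by rewrite !mulr0 addr0.
- exact: cross.
- by rewrite addrC; apply: cross.
- by rewrite !mulr0 addr0.
Qed.

Lemma potential_drift_ge0 X :
  0 <= moran_mean X (fun u v => potential (moran_next X u v) - potential X).
Proof.
set D := fun u v => moran_pick X u v * (potential (moran_next X u v) - potential X).
have symmetrize : moran_mean X (fun u v => potential (moran_next X u v) - potential X) *+ 2
    = \sum_u \sum_v (D u v + D v u).
  rewrite mulr2n; under [RHS]eq_bigr => u _ do rewrite big_split /=.
  by rewrite big_split /= [X in _ + X]exchange_big.
have : 0 <= \sum_u \sum_v (D u v + D v u).
  by apply: sumr_ge0 => u _; apply: sumr_ge0 => v _; apply: potential_pair_drift_ge0.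
by rewrite -symmetrize mulr2n; lra.
Qed.

Definition min_sq_jump : R := r_min r ^+ 3 / (n ^+ 4 * m_max m).

Lemma min_sq_jump_gt0 : 0 < min_sq_jump.
Proof. by rewrite divr_gt0 ?exprn_gt0 ?mulr_gt0 ?exprn_gt0. Qed.

Lemma min_sq_jump_le X : X != finset.set0 -> X != [set: V] ->
  min_sq_jump <= moran_mean X (fun u v => (potential (moran_next X u v) - potential X) ^+ 2).
Proof.
move=> X0 XT; have [u [v [uX vX euv]]] := exists_boundary_edge e_conn X0 XT.
apply: le_trans (moran_mean_ge_term _ u v (fun _ _ => sqr_ge0 _)).
rewrite potential_next uX (negbTE vX) /=.
have -> : min_sq_jump = r_min r / (n * m_max m) / n * (r_min r / n) ^+ 2.
  by rewrite /min_sq_jump; field; rewrite !gt_eqF.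
apply: ler_pM; rewrite ?sqr_ge0 ?moran_pick_ge //.
- by rewrite !divr_ge0 ?mulr_ge0 // ltW.
- by rewrite ler_pXn2r ?nnegrE ?divr_ge0 ?potential_weight_ge // ltW.
Qed.

Definition nonabsorbing (X : {set V}) : bool := (X != finset.set0) && (X != [set: V]).

Lemma potential_sq_drift X :
  potential X ^+ 2 + min_sq_jump * (nonabsorbing X)%:R
  <= \sum_Y moran_step e m r X Y * potential Y ^+ 2.
Proof.
rewrite moran_stepE.
set dphi := fun u v => potential (moran_next X u v) - potential X.
have -> : moran_mean X (fun u v => potential (moran_next X u v) ^+ 2) =
    potential X ^+ 2 + (potential X *+ 2 * moran_mean X dphi
                        + moran_mean X (fun u v => dphi u v ^+ 2)).
  rewrite -moran_meanZ -(moran_mean_cst X (potential X ^+ 2)) -!moran_meanD.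
  by apply: eq_moran_mean => u v; rewrite /dphi; ring.
rewrite lerD2l.
have drift_ge0 : 0 <= potential X *+ 2 * moran_mean X dphi.
  by rewrite mulr_ge0 ?mulrn_wge0 ?potential_ge0 ?potential_drift_ge0.
case: (boolP (nonabsorbing X)) => [/andP [X0 XT] | _] /=.
  by rewrite mulr1n mulr1; have := min_sq_jump_le X0 XT; lra.
rewrite mulr0n mulr0 addr_ge0 // moran_mean_ge0 // => u v.
exact: sqr_ge0.
Qed.

Lemma not_absorbed_probE S t :
  not_absorbed_prob e m r S t = \sum_X moran_dist e m r S t X * (nonabsorbing X)%:R.
Proof.
rewrite /not_absorbed_prob big_mkcond /=; apply: eq_bigr => X _.
by rewrite /nonabsorbing; case: ifP => _ /=; rewrite ?mulr1 ?mulr0.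
Qed.

Lemma not_absorbed_prob_ge0 S t : 0 <= not_absorbed_prob e m r S t.
Proof. by apply: sumr_ge0 => X _; apply: moran_dist_ge0. Qed.

Lemma sum_not_absorbed_prob_le S N :
  \sum_(0 <= t < N) not_absorbed_prob e m r S t <=
  ((#|V| ^ 2)%:R * (m_max m / r_min r)) ^+ 3.
Proof.
have -> : ((#|V| ^ 2)%:R * (m_max m / r_min r)) ^+ 3 = (n * m_max m) ^+ 2 / min_sq_jump.
  by rewrite /min_sq_jump /n natrX; field; rewrite !gt_eqF.
rewrite ler_pdivlMr ?min_sq_jump_gt0 // mulrC.
under eq_bigr => t _ do rewrite not_absorbed_probE.
apply: (potential_drift_bound (moran_dist_ge0 S) (sum_moran_dist S)
          (P := moran_step e m r) (fun _ _ => erefl) (g := fun X => potential X ^+ 2)).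
- by move=> X; apply: sqr_ge0.
- by move=> X; rewrite ler_pXn2r ?nnegrE ?potential_ge0 ?potential_le ?mulr_ge0 // ltW.
- exact: potential_sq_drift.
Qed.

End MoranProcess.

Theorem lemma1 (R : realType) (V : finType) (e : rel V) (m r : V -> R)
  (S : {set V})
  (He : undirected_graph e) (Hconn : strongly_connected e)
  (Hm : forall u, 0 < m u) (Hr : forall u, 0 < r u)
  (Hbias : mutant_biased m r) :
  (expected_absorption_time e m r S <=
     (((#|V| ^ 2)%:R * (m_max m / r_min r)) ^+ 3)%R%:E)%E.
Proof.
have partial_le N : \sum_(0 <= t < N) not_absorbed_prob e m r S t <=
    ((#|V| ^ 2)%:R * (m_max m / r_min r)) ^+ 3.
  have [V_le1 | V_gt1] := leqP #|V| 1; last exact: sum_not_absorbed_prob_le.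
  rewrite big1 => [|t _].
    by rewrite exprn_ge0 // mulr_ge0 ?divr_ge0 ?m_max_ge0 ?r_min_ge0.
  rewrite /not_absorbed_prob big_pred0 // => X.
  by apply: contraTF V_le1 => /andP [X0 XT]; rewrite -ltnNge (card_gt1_nontrivial X0 XT).
apply: lime_le.
  by apply: is_cvg_nneseries => t _ _; rewrite lee_fin not_absorbed_prob_ge0.
by apply: nearW => N; rewrite sumEFin lee_fin.
Qed.
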